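(* Let $\mathcal{P}=\{P_1,\ldots,P_n\}$, let $\mathcal{Q}\subseteq 2^{\mathcal{P}}$ and let $\mathcal{F}=\{F_1,\ldots,F_m\}\subseteq 2^{\mathcal{P}}$ be a fail-prone system, and set $\mathcal{F}^c=\{F_1^c,\ldots,F_m^c\}$. Let $I=\langle \xi_{\mathcal{Q}_{\bar X}},\ \xi_{\mathcal{Q}_{\bar Y}},\ \xi_{\mathcal{F}^c_{\bar Z}},\ \lambda,\ \delta'\rangle\subseteq\mathbb{B}(\bar X,\bar Y,\bar Z,\bar T)$, where $\delta'(\bar X,\bar Y,\bar Z,\bar T)=\prod_{i=1}^n(T_iX_iY_iZ_i+X_iY_iZ_i+1)$, and let $\mathcal{G}$ be a Gröbner basis for $I$. If $|SM(\mathcal{G})|=|\mathcal{Q}|^2\cdot|\mathcal{F}|\cdot|\mathcal{F}^*|$, then $\mathcal{Q}$ fulfills masking consistency with respect to $\mathcal{F}$, i.e. $(Q_1\cap Q_2)\setminus F_1\not\subseteq F_2$ for all $Q_1,Q_2\in\mathcal{Q}$ and all $F_1,F_2\in\mathcal{F}$.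
   Context: $\mathbb{B}=\mathbb{F}_2$; $\mathbb{B}(\bar X,\bar Y,\bar Z,\bar T)$ is the Boolean polynomial ring in $4n$ variables $X_i,Y_i,Z_i,T_i$ ($1\le i\le n$) over $\mathbb{F}_2$ modulo the relations $V^2=V$ for every variable $V$. $F^c=\mathcal{P}\setminus F$. $\varphi:2^{\mathcal{P}}\to\mathbb{B}^n$ sends a set to its indicator vector. For $S\subseteq\mathcal{P}$, $\xi_S(\bar W)=\prod_{i=1}^n(1+W_i+\varphi(S)_i)$; for $\mathcal{A}\subseteq 2^{\mathcal{P}}$, $\xi_{\mathcal{A}_{\bar W}}=\prod_{A\in\mathcal{A}}(\xi_A(\bar W)+1)$. $\gamma(\bar X,\bar Y)=\prod_{i=1}^n(X_iY_i+Y_i+1)+1$ and $\lambda(\bar T)=\prod_{F\in\mathcal{F}}\gamma(\varphi(F),\bar T)$. $\mathcal{F}^*=\{F'\subseteq F:F\in\mathcal{F}\}$. A fail-prone system is a collection of subsets of $\mathcal{P}$ none of which is contained in another. Monomial order: lexicographic with block order $\bar T<\bar Z<\bar Y<\bar X$ and within blocks $X_n\prec\cdots\prec X_1$ etc. A Gröbner basis of $I$ is a generating set $\mathcal{G}$ such that every nonzero $f\in I$ has leading monomial divisible by that of some $g\in\mathcal{G}$; $SM(\mathcal{G})$ is the set of multilinear monomials not in the ideal generated by the leading monomials of elements of $I$. *)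

From HB Require Import structures.
From mathcomp Require Import all_boot all_order all_algebra.
Set Implicit Arguments. Unset Strict Implicit. Unset Printing Implicit Defensive.
Import GRing.Theory.
Local Open Scope ring_scope.

(* The participants P = {P_1,...,P_n} are modelled by 'I_n (P_{i+1} <-> i). *)

(* Variables of B(X,Y,Z,T): pairs (block, index); block 0 = X, 1 = Y, 2 = Z, 3 = T. *)
Definition var_t (n : nat) := ('I_4 * 'I_n)%type.
Definition blkX : 'I_4 := @Ordinal 4 0 isT.
Definition blkY : 'I_4 := @Ordinal 4 1 isT.
Definition blkZ : 'I_4 := @Ordinal 4 2 isT.
Definition blkT : 'I_4 := @Ordinal 4 3 isT.

(* The Boolean polynomial ring F_2[vars]/(V^2 - V), each element represented by
   its unique multilinear representative: a multilinear monomial is a set of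
   variables, a Boolean polynomial is its coefficient function. *)
Definition mono (n : nat) := {set var_t n}.
Definition bpoly (n : nat) := {ffun mono n -> 'F_2}.

Section BoolPoly.
Variable n : nat.

(* zero and addition come from the Z-module structure of finite functions *)
Definition bone : bpoly n := [ffun S => (S == set0)%:R].
Definition bconst (c : 'F_2) : bpoly n := [ffun S => c * (S == set0)%:R].
Definition bmono (M : mono n) : bpoly n := [ffun S => (S == M)%:R].
Definition bvar (v : var_t n) : bpoly n := bmono [set v].
(* product: x_v^2 = x_v, i.e. monomials multiply by union *)
Definition bmul (p q : bpoly n) : bpoly n :=
  [ffun S => \sum_(A : mono n) \sum_(B : mono n | A :|: B == S) p A * q B].
Definition bprod (s : seq (bpoly n)) : bpoly n := foldr bmul bone s.

Definition Xv (i : 'I_n) := bvar (blkX, i).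
Definition Yv (i : 'I_n) := bvar (blkY, i).
Definition Zv (i : 'I_n) := bvar (blkZ, i).
Definition Tv (i : 'I_n) := bvar (blkT, i).

Definition phi (S : {set 'I_n}) (i : 'I_n) : 'F_2 := (i \in S)%:R.

Definition xi (W : 'I_n -> bpoly n) (S : {set 'I_n}) : bpoly n :=
  bprod [seq bone + W i + bconst (phi S i) | i <- enum 'I_n].
Definition xiFam (W : 'I_n -> bpoly n) (AA : {set {set 'I_n}}) : bpoly n :=
  bprod [seq xi W A + bone | A <- enum AA].

Definition gammaT (F : {set 'I_n}) : bpoly n :=
  bprod [seq bmul (bconst (phi F i)) (Tv i) + Tv i + bone | i <- enum 'I_n] + bone.
Definition lambdaT (FF : {set {set 'I_n}}) : bpoly n :=
  bprod [seq gammaT F | F <- enum FF].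
Definition delta' : bpoly n :=
  bprod [seq bmul (Tv i) (bmul (Xv i) (bmul (Yv i) (Zv i)))
             + bmul (Xv i) (bmul (Yv i) (Zv i)) + bone | i <- enum 'I_n].

Definition complFam (FF : {set {set 'I_n}}) : {set {set 'I_n}} :=
  [set ~: F | F in FF].
Definition downClosure (FF : {set {set 'I_n}}) : {set {set 'I_n}} :=
  [set F' : {set 'I_n} | [exists F in FF, F' \subset F]].
Definition fail_prone (FF : {set {set 'I_n}}) : Prop :=
  forall F1 F2, F1 \in FF -> F2 \in FF -> F1 \subset F2 -> F1 = F2.

Definition ideal (A : {set bpoly n}) : {set bpoly n} :=
  [set f | [exists h : {ffun bpoly n -> bpoly n}, f == \sum_(g in A) bmul (h g) g]].

(* monomial order: lex with T < Z < Y < X and X_n < ... < X_1 etc.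
   key v smaller <=> v larger variable *)
Definition vkey (v : var_t n) : nat := (v.1 * n + v.2)%N.
Definition mlt (M1 M2 : mono n) : bool :=
  [exists v, [&& v \in M2, v \notin M1 &
     [forall w, (vkey w < vkey v)%N ==> ((w \in M1) == (w \in M2))]]].
Definition isLM (f : bpoly n) (M : mono n) : bool :=
  (f M != 0) && [forall M', (f M' != 0) ==> (M' == M) || mlt M' M].

Definition groebner_basis (G I : {set bpoly n}) : Prop :=
  ideal G = I /\
  forall f, f \in I -> f != 0 ->
    exists g, exists Mg, exists Mf,
      [/\ g \in G, isLM g Mg, isLM f Mf & Mg \subset Mf].

Definition leadMonos (I : {set bpoly n}) : {set bpoly n} :=
  [set bmono M | M in [set M | [exists f in I, (f != 0) && isLM f M]]].
Definition SM (I : {set bpoly n}) : {set mono n} :=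
  [set M | bmono M \notin ideal (leadMonos I)].

Definition idealI (QQ FF : {set {set 'I_n}}) : {set bpoly n} :=
  ideal [set xiFam Xv QQ; xiFam Yv QQ; xiFam Zv (complFam FF);
             lambdaT FF; delta'].

Definition masking_consistent (QQ FF : {set {set 'I_n}}) : Prop :=
  forall Q1 Q2 F1 F2, Q1 \in QQ -> Q2 \in QQ -> F1 \in FF -> F2 \in FF ->
    ~~ ((Q1 :&: Q2) :\: F1 \subset F2).

End BoolPoly.

From mathcomp Require Import all_boot all_order all_algebra.
Set Implicit Arguments. Unset Strict Implicit. Unset Printing Implicit Defensive.
Import GRing.Theory.
Local Open Scope ring_scope.

(* Evaluation at the 2^(4n) points of B^(4n) is injective on Boolean polynomials
   (interpolation by point indicators), so, as in the Boolean Nullstellensatz, an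
   ideal contains every polynomial vanishing on its variety V.  A nonzero element
   of the ideal has a leading monomial, which is not standard; hence a combination
   of standard monomials vanishing on V is zero, and |SM| <= |V|.  A point of V is
   determined by its four blocks of coordinates (Q1, Q2, F^c, F'), which range over
   Q x Q x F^c x F^*, and delta' vanishes there only if Q1 /\ Q2 /\ F^c is not
   contained in F'.  A failure of masking consistency, (Q1 /\ Q2) \ F1 contained in
   F2, is thus a configuration missing from V, so |SM| <= |V| < |Q|^2 |F| |F^*|. *)

Lemma prodr_natb (R : comPzSemiRingType) (I : finType) (A : {pred I}) (c : pred I) :
  \prod_(i in A) ((c i)%:R : R) = [forall i in A, c i]%:R.
Proof.
have [/forall_inP cA | /forall_inPn[i Ai /negbTE ci]] := boolP [forall i in A, c i].
  by rewrite big1 // => i /cA ->.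
by rewrite (bigD1 i Ai) /= ci mul0r.
Qed.

Lemma F2_natb_inj : injective (fun b : bool => b%:R : 'F_2).
Proof. by case; case. Qed.

Lemma F2_natb_eq0 (b : bool) : (b%:R == 0 :> 'F_2) = ~~ b.
Proof. by case: b. Qed.

Lemma F2_natb_neq0 (x : 'F_2) : (x != 0)%:R = x.
Proof. by case: x => -[|[|k]] // lt_k2; apply/val_inj. Qed.

Lemma F2_natb_add1 (b : bool) : b%:R + 1 = (~~ b)%:R :> 'F_2.
Proof. by case: b; apply/eqP. Qed.

Lemma card_set_interval (T : finType) (L U : {set T}) : L \subset U ->
  #|[set A : {set T} | L \subset A & A \subset U]| = (2 ^ #|U :\: L|)%N.
Proof.
move=> sLU; rewrite -card_powerset -(@card_in_imset _ _ (fun A => A :\: L)).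
  apply: eq_card => B; rewrite inE; apply/imsetP/idP.
    by move=> [A]; rewrite inE => /andP[_ sAU] ->; apply: setSD.
  move=> sBUL; exists (L :|: B).
    by rewrite inE subsetUl subUset sLU (subset_trans sBUL (subsetDl _ _)).
  rewrite setDUl setDv set0U; apply/esym/setDidPl.
  by move: sBUL; rewrite subsetD => /andP[].
move=> A1 A2; rewrite !inE => /andP[sLA1 _] /andP[sLA2 _] eqD.
by rewrite -(setID A1 L) -(setID A2 L) eqD (setIidPr sLA1) (setIidPr sLA2).
Qed.

Lemma sum_set_interval_F2 (T : finType) (L U : {set T}) :
  \sum_(A : {set T} | (L \subset A) && (A \subset U)) (1 : 'F_2) = (L == U)%:R.
Proof.
have [sLU | nsLU] := boolP (L \subset U); last first.
  rewrite big_pred0 => [|A].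
    by case: eqP nsLU => // ->; rewrite subxx.
  by apply: contraNF nsLU => /andP[]; apply: subset_trans.
rewrite -big_set sumr_const card_set_interval // -[LHS]Fp_nat_mod // modn2 oddX orbF.
by rewrite cards_eq0 setD_eq0 eqEsubset sLU.
Qed.

Section BooleanPolynomials.
Variable n : nat.
Implicit Types (f g : bpoly n) (P S : mono n) (A : {set bpoly n}).

(* [beval P f] is the value of f at the 0/1 point whose true variables are P. *)
Definition beval P f : 'F_2 := \sum_(S : mono n | S \subset P) f S.

(* The indicator of the point P: prod_(v in P) x_v * prod_(v notin P) (1 + x_v). *)
Definition bdelta P : bpoly n := [ffun S : mono n => (P \subset S)%:R].

Lemma beval0 P : beval P 0 = 0.
Proof. by rewrite /beval big1 // => S _; rewrite ffunE. Qed.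

Lemma bevalD P f g : beval P (f + g) = beval P f + beval P g.
Proof. by rewrite /beval -big_split; apply: eq_bigr => S _; rewrite ffunE. Qed.

Lemma bevalB P f g : beval P (f - g) = beval P f - beval P g.
Proof. by rewrite /beval -sumrB; apply: eq_bigr => S _; rewrite !ffunE. Qed.

Lemma beval_mono P M : beval P (bmono M) = (M \subset P)%:R.
Proof.
have [sMP | nsMP] := boolP (M \subset P).
  rewrite /beval (bigD1 M) //= ffunE eqxx big1 ?addr0 // => S /andP[_ nSM].
  by rewrite ffunE (negbTE nSM).
rewrite /beval big1 // => S sSP; rewrite ffunE.
by case: eqP sSP nsMP => // -> ->.
Qed.

Lemma bevalM P f g : beval P (bmul f g) = beval P f * beval P g.
Proof.
rewrite /beval big_distrlr pair_big_dep /=.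
rewrite (partition_big (fun AB => AB.1 :|: AB.2) (fun S => S \subset P)) /=; last first.
  by move=> AB; rewrite subUset.
apply: eq_bigr => S sSP; rewrite ffunE pair_big_dep /=; apply: eq_bigl => -[A B] /=.
by rewrite -subUset andbC; case: eqP => // ->; rewrite sSP.
Qed.

Lemma beval1 P : beval P (bone n) = 1.
Proof. by rewrite [bone n]/(bmono set0) beval_mono sub0set. Qed.

Lemma beval_const P c : beval P (bconst n c) = c.
Proof.
rewrite /beval (bigD1 set0) ?sub0set //= ffunE eqxx mulr1 big1 ?addr0 //.
by move=> S /andP[_ nS0]; rewrite ffunE (negbTE nS0) mulr0.
Qed.

Lemma beval_var P v : beval P (bvar v) = (v \in P)%:R.
Proof. by rewrite beval_mono sub1set. Qed.

Lemma beval_prod P s : beval P (bprod s) = \prod_(p <- s) beval P p.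
Proof.
elim: s => [|p s IHs]; first by rewrite big_nil beval1.
by rewrite big_cons bevalM IHs.
Qed.

Lemma beval_delta P Q : beval Q (bdelta P) = (P == Q)%:R.
Proof.
rewrite /beval -sum_set_interval_F2 big_mkcondl.
by apply: eq_bigr => S _; rewrite ffunE; case: (P \subset S).
Qed.

Lemma bpoly_interpolation f : f = \sum_(P | beval P f != 0) bdelta P.
Proof.
apply/ffunP => S; rewrite sum_ffunE.
have count_above (T : mono n) :
    \sum_(P : mono n | T \subset P) (P \subset S)%:R = (T == S)%:R :> 'F_2.
  rewrite -sum_set_interval_F2 big_mkcondr /=.
  by apply: eq_bigr => P _; case: (P \subset S).
transitivity (\sum_(P : mono n) beval P f * (P \subset S)%:R).
  under eq_bigr do rewrite /beval big_distrl.
  rewrite (exchange_big_dep predT) //=.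
  under eq_bigr do rewrite -big_distrr count_above.
  rewrite (bigD1 S) //= eqxx mulr1 big1 ?addr0 // => T nTS.
  by rewrite (negbTE nTS) mulr0.
rewrite [RHS]big_mkcond; apply: eq_bigr => P _.
by rewrite ffunE -[beval P f]F2_natb_neq0; case: (_ != 0); rewrite ?mul1r ?mul0r.
Qed.

Lemma beval_inj f g : (forall P, beval P f = beval P g) -> f = g.
Proof.
move=> eq_fg; rewrite [f]bpoly_interpolation [g]bpoly_interpolation.
by apply: eq_bigl => P; rewrite eq_fg.
Qed.

Lemma bmul0l g : bmul 0 g = 0.
Proof. by apply: beval_inj => P; rewrite bevalM !beval0 mul0r. Qed.

Lemma bmul1l g : bmul (bone n) g = g.
Proof. by apply: beval_inj => P; rewrite bevalM beval1 mul1r. Qed.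

Lemma bmulDl f1 f2 g : bmul (f1 + f2) g = bmul f1 g + bmul f2 g.
Proof. by apply: beval_inj => P; rewrite !(bevalD, bevalM) mulrDl. Qed.

Lemma bmul_delta P g : beval P g = 1 -> bmul (bdelta P) g = bdelta P.
Proof.
move=> gP1; apply: beval_inj => Q; rewrite bevalM beval_delta.
by case: eqP => [<-|_]; rewrite ?gP1 ?mulr1 ?mul0r.
Qed.

Lemma ideal0 A : 0 \in ideal A.
Proof.
by rewrite inE; apply/existsP; exists 0; rewrite big1 // => g _; rewrite ffunE bmul0l.
Qed.

Lemma idealD A f g : f \in ideal A -> g \in ideal A -> f + g \in ideal A.
Proof.
rewrite !inE => /existsP[h1 /eqP->] /existsP[h2 /eqP->].
apply/existsP; exists (h1 + h2); rewrite -big_split /=; apply/eqP.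
by apply: eq_bigr => a _; rewrite ffunE bmulDl.
Qed.

Lemma ideal_mull A r g : g \in A -> bmul r g \in ideal A.
Proof.
move=> gA; rewrite inE; apply/existsP; exists [ffun h => if h == g then r else 0].
rewrite (bigD1 g) //= ffunE eqxx big1 ?addr0 // => h /andP[_ /negbTE nhg].
by rewrite ffunE nhg bmul0l.
Qed.

Lemma mem_ideal A g : g \in A -> g \in ideal A.
Proof. by move=> gA; rewrite -(bmul1l g) ideal_mull. Qed.

Definition variety A : {set mono n} := [set P | [forall g in A, beval P g == 0]].

Lemma vanishing_mem_ideal A f :
  {in variety A, forall P, beval P f = 0} -> f \in ideal A.
Proof.
move=> f0; rewrite [f]bpoly_interpolation.
apply: (big_rec (fun h => h \in ideal A)) => [|P h fP hI]; first exact: ideal0.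
apply: idealD hI.
have /forall_inPn[g gA gP] : ~~ [forall g in A, beval P g == 0].
  by apply: contra fP => PV; rewrite f0 // inE.
rewrite -(bmul_delta (g := g)) ?ideal_mull //.
by rewrite -[beval P g]F2_natb_neq0 gP.
Qed.

Definition has_leading_monomials (I : {set bpoly n}) : Prop :=
  forall f, f \in I -> f != 0 -> exists M, isLM f M.

Lemma SM_supported_eq0 I f : has_leading_monomials I -> f \in I ->
  (forall M, f M != 0 -> M \in SM I) -> f = 0.
Proof.
move=> hasLM fI suppf; apply/eqP; apply: contraT => f_neq0.
have [M LM_M] := hasLM f fI f_neq0.
have /suppf : f M != 0 by case/andP: LM_M.
rewrite inE => /negP[]; apply/mem_ideal/imsetP; exists M => //.
by rewrite inE; apply/existsP; exists f; rewrite fI f_neq0.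
Qed.

Definition poly_of_set (K : {set mono n}) : bpoly n := [ffun M => (M \in K)%:R].

Lemma card_SM_le_variety A : has_leading_monomials (ideal A) ->
  (#|SM (ideal A)| <= #|variety A|)%N.
Proof.
move=> hasLM; set V := variety A.
pose restr K := [ffun P => if P \in V then beval P (poly_of_set K) else 0].
have restr_inj : {in powerset (SM (ideal A)) &, injective restr}.
  move=> K1 K2; rewrite !inE => sK1 sK2 /ffunP eq_restr.
  have /eqP : poly_of_set K1 - poly_of_set K2 = 0.
    apply: SM_supported_eq0 hasLM _ _.
      apply: vanishing_mem_ideal => P VP.
      by move: (eq_restr P); rewrite !ffunE VP bevalB => ->; rewrite subrr.
    move=> M; rewrite !ffunE.
    have [/(subsetP sK1)//|_] := boolP (M \in K1).
    by have [/(subsetP sK2)//|_] := boolP (M \in K2); rewrite subrr eqxx.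
  rewrite subr_eq0 => /eqP/ffunP eqK; apply/setP => M.
  by have := eqK M; rewrite !ffunE => /F2_natb_inj.
rewrite -(@leq_exp2l 2) // -card_powerset -(card_in_imset restr_inj).
have -> : (2 ^ #|V| = #|pffun_on (0%R : 'F_2) V predT|)%N.
  by rewrite card_pffun_on card_Fp.
apply/subset_leq_card/subsetP => _ /imsetP[K _ ->]; apply/pffun_onP; split => //.
by apply/subsetP => P; rewrite inE ffunE; case: (P \in V); rewrite ?eqxx.
Qed.

End BooleanPolynomials.

Section Generators.
Variable n : nat.
Implicit Types (P : mono n) (A F : {set 'I_n}) (AA QQ FF : {set {set 'I_n}}).

Definition block (b : 'I_4) P : {set 'I_n} := [set i | (b, i) \in P].

Lemma beval_xi b P A : beval P (xi (fun i => bvar (b, i)) A) = (block b P == A)%:R.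
Proof.
have xnor (x y : bool) : 1 + x%:R + y%:R = (x == y)%:R :> 'F_2.
  by case: x; case: y; apply/eqP.
rewrite beval_prod big_map big_enum /=.
under eq_bigr do rewrite !bevalD beval1 beval_var beval_const xnor.
rewrite prodr_natb; congr (_ : bool)%:R; apply/forall_inP/eqP => [eqA | <- i _].
  by apply/setP => i; rewrite inE; apply/eqP/eqA.
by rewrite inE.
Qed.

Lemma beval_xiFam b P AA :
  beval P (xiFam (fun i => bvar (b, i)) AA) = (block b P \notin AA)%:R.
Proof.
rewrite beval_prod big_map big_enum /=.
under eq_bigr do rewrite bevalD beval_xi beval1 F2_natb_add1.
rewrite prodr_natb; congr (_ : bool)%:R; apply/forall_inP/idP => [neqA | nAA A AA_A].
  by apply/negP => /neqA; rewrite eqxx.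
by apply: contraNneq nAA => ->.
Qed.

Lemma beval_gammaT P F : beval P (gammaT F) = (~~ (block blkT P \subset F))%:R.
Proof.
have imp (a t : bool) : a%:R * t%:R + t%:R + 1 = (t ==> a)%:R :> 'F_2.
  by case: a; case: t; apply/eqP.
rewrite bevalD beval1 beval_prod big_map big_enum /=.
under eq_bigr do rewrite !bevalD bevalM beval_const beval1 beval_var /phi imp.
rewrite prodr_natb F2_natb_add1; congr (~~ _)%:R.
apply/forall_inP/subsetP => [sub i | sub i _].
  by rewrite inE => /(implyP (sub i isT)).
by apply/implyP => tP; apply: sub; rewrite inE.
Qed.

Lemma beval_lambdaT P FF :
  beval P (lambdaT FF) = (block blkT P \notin downClosure FF)%:R.
Proof.
rewrite beval_prod big_map big_enum /=.
under eq_bigr do rewrite beval_gammaT.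
by rewrite prodr_natb inE negb_exists_in.
Qed.

Lemma beval_delta' P : beval P (delta' n) =
  (block blkX P :&: block blkY P :&: block blkZ P \subset block blkT P)%:R.
Proof.
have imp (x y z t : bool) :
    t%:R * (x%:R * (y%:R * z%:R)) + x%:R * (y%:R * z%:R) + 1
    = ([&& x, y & z] ==> t)%:R :> 'F_2.
  by case: x; case: y; case: z; case: t; apply/eqP.
rewrite beval_prod big_map big_enum /=.
under eq_bigr do rewrite !bevalD !bevalM beval1 !beval_var imp.
rewrite prodr_natb; congr (_ : bool)%:R.
apply/forall_inP/subsetP => [sub i | sub i _].
  by rewrite !inE => /andP[/andP[x y] z]; apply: (implyP (sub i isT)); rewrite x y z.
by apply/implyP => /and3P[x y z]; have := sub i; rewrite !inE x y z => /(_ isT).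
Qed.

Definition blocks P := (block blkX P, block blkY P, block blkZ P, block blkT P).

Lemma blocks_inj : injective blocks.
Proof.
move=> P1 P2 [eqX eqY eqZ eqT]; apply/setP => -[b i].
have /setP/(_ i) : block b P1 = block b P2.
  case: b => -[|[|[|[|b]]]] lt_b4 //.
  - by rewrite (_ : Ordinal _ = blkX) //; apply: val_inj.
  - by rewrite (_ : Ordinal _ = blkY) //; apply: val_inj.
  - by rewrite (_ : Ordinal _ = blkZ) //; apply: val_inj.
  - by rewrite (_ : Ordinal _ = blkT) //; apply: val_inj.
by rewrite !inE.
Qed.

Definition configurations QQ FF :=
  setX (setX (setX QQ QQ) (complFam FF)) (downClosure FF).

Lemma card_configurations QQ FF :
  #|configurations QQ FF| = (#|QQ| ^ 2 * #|FF| * #|downClosure FF|)%N.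
Proof. by rewrite !cardsX card_imset ?mulnn //; apply: setC_inj. Qed.

Definition generators QQ FF : {set bpoly n} :=
  [set xiFam (@Xv n) QQ; xiFam (@Yv n) QQ; xiFam (@Zv n) (complFam FF);
       lambdaT FF; delta' n].

Lemma blocks_variety QQ FF P : P \in variety (generators QQ FF) ->
  blocks P \in configurations QQ FF /\
  ~~ (block blkX P :&: block blkY P :&: block blkZ P \subset block blkT P).
Proof.
rewrite inE => /forall_inP vanish.
have := vanish _ (set1Ul _ (set1Ul _ (set1Ul _ (set21 _ _)))).
rewrite beval_xiFam F2_natb_eq0 negbK => inX.
have := vanish _ (set1Ul _ (set1Ul _ (set1Ul _ (set22 _ _)))).
rewrite beval_xiFam F2_natb_eq0 negbK => inY.
have := vanish _ (set1Ul _ (set1Ul _ (set1Ur _ _))).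
rewrite beval_xiFam F2_natb_eq0 negbK => inZ.
have := vanish _ (set1Ul _ (set1Ur _ _)).
rewrite beval_lambdaT F2_natb_eq0 negbK => inT.
have := vanish _ (set1Ur _ _).
rewrite beval_delta' F2_natb_eq0 => unmasked.
by rewrite !in_setX inX inY inZ inT.
Qed.

End Generators.

Theorem mainTheorem6 (n : nat) (QQ FF : {set {set 'I_n}}) (G : {set bpoly n}) :
  fail_prone FF ->
  groebner_basis G (idealI QQ FF) ->
  #|SM (idealI QQ FF)| = (#|QQ| ^ 2 * #|FF| * #|downClosure FF|)%N ->
  masking_consistent QQ FF.
Proof.
move=> _ [_ isGB] cardSM Q1 Q2 F1 F2 Q1in Q2in F1in F2in; apply/negP => masked.
have hasLM : has_leading_monomials (idealI QQ FF).
  by move=> f fI f_neq0; have [_ [_ [M [_ _ LM _]]]] := isGB f fI f_neq0; exists M.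
have le_SM_V : (#|SM (idealI QQ FF)| <= #|variety (generators QQ FF)|)%N.
  exact: card_SM_le_variety.
set witness := (Q1, Q2, ~: F1, F2).
have witness_in : witness \in configurations QQ FF.
  rewrite !in_setX Q1in Q2in imset_f // inE.
  by apply/existsP; exists F2; rewrite F2in subxx.
have blocks_V :
    @blocks n @: variety (generators QQ FF) \subset configurations QQ FF :\ witness.
  apply/subsetP => _ /imsetP[P /blocks_variety[inC unmasked] ->].
  rewrite in_setD1 inC andbT; apply: contraNneq unmasked => -[-> -> -> ->].
  by rewrite -setDE.
move: le_SM_V; rewrite cardSM -card_configurations (cardsD1 witness) witness_in.
rewrite -(card_imset _ (@blocks_inj n)) => /leq_trans/(_ (subset_leq_card blocks_V)).
by rewrite ltnn.
Qed.
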